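(* Let $k$ be a field of characteristic $0$, $R=k[x_1,\dots,x_n]$, $\ell=x_1+\dots+x_n$, let $d$ be a positive integer with $d\le n$, let $J=(x_1^2,\dots,x_n^2)$ and $G=J\colon(\ell^d)$ (equivalently, $G$ is the annihilator ideal of $e_{n-d}(X_1,\dots,X_n)$). Then $$G=J+\Big(\prod_{i=1}^{(n-d+1)/2}(x_{2i-1}-x_{2i})\Big)_{S_n}\quad\text{if } n+d \text{ is odd},$$ $$G=J+\Big(x_{n-d+1}\prod_{i=1}^{(n-d)/2}(x_{2i-1}-x_{2i})\Big)_{S_n}\quad\text{if } n+d \text{ is even}.$$ (That is, the products $(x_1-x_2)(x_3-x_4)\cdots(x_{n-d}-x_{n-d+1})$, respectively $(x_1-x_2)\cdots(x_{n-d-1}-x_{n-d})x_{n-d+1}$.)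
   Context: The symmetric group $S_n$ acts on $R$ by permuting the variables, and for $f\in R$, $(f)_{S_n}$ denotes the ideal generated by $\{\sigma(f)\mid\sigma\in S_n\}$. $R$ acts on $S=k[X_1,\dots,X_n]$ by $x_i\circ F=\partial F/\partial X_i$, and the annihilator ideal of $F\in S$ is $\{f\in R\mid f\circ F=0\}$; $e_m$ denotes the $m$-th elementary symmetric polynomial. An empty product equals $1$. *)

From HB Require Import structures.
From mathcomp Require Import all_boot all_order all_algebra all_fingroup.
From mathcomp Require Import mpoly.
Set Implicit Arguments. Unset Strict Implicit. Unset Printing Implicit Defensive.
Import GRing.Theory.
Local Open Scope ring_scope.

Section Defs.
Variables (k : fieldType) (n : nat).

Definition gen_ideal (S : {mpoly k[n]} -> Prop) (f : {mpoly k[n]}) : Prop :=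
  exists (m : nat) (c g : 'I_m -> {mpoly k[n]}),
    (forall i, S (g i)) /\ f = \sum_(i < m) c i * g i.

(* The variable x_{j+1} (0-based index j); junk value 0 if j >= n (never used
   out of range in the theorem). *)
Definition var (j : nat) : {mpoly k[n]} :=
  if (insub j : option 'I_n) is Some i then 'X_i else 0.

Definition ell : {mpoly k[n]} := \sum_(i < n) 'X_i.

Definition J_gens (g : {mpoly k[n]}) : Prop := exists i : 'I_n, g = 'X_i ^+ 2.
Definition J : {mpoly k[n]} -> Prop := gen_ideal J_gens.

Definition colon (I : {mpoly k[n]} -> Prop) (h : {mpoly k[n]}) (f : {mpoly k[n]}) : Prop :=
  I (f * h).

Definition J_plus_sym (f : {mpoly k[n]}) : {mpoly k[n]} -> Prop :=
  gen_ideal (fun g => J_gens g \/ exists s : 'S_n, g = msym s f).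

Definition pair_prod (m : nat) : {mpoly k[n]} :=
  \prod_(i < m) (var (2 * i) - var (2 * i + 1)).

End Defs.

From Pilot Require Import Defs.
From HB Require Import structures.
From mathcomp Require Import all_boot all_order all_algebra all_fingroup.
From mathcomp Require Import mpoly.
From mathcomp Require Import ring zify.
Import GRing.Theory.
Local Open Scope ring_scope.
Set Implicit Arguments. Unset Strict Implicit. Unset Printing Implicit Defensive.

(* Write [ell_m = x_0 + ... + x_(m-1)] and [G(m, d)] for [J] plus the [S_m]-orbit of the
   generator [g(m, d)] of the statement in the first [m] variables.  [G(m, d)] kills
   [ell_m^d]: a factor [x_(2i) - x_(2i+1)] of [g(m, d)] turns [x_(2i) + x_(2i+1)] into
   [x_(2i)^2 - x_(2i+1)^2], so modulo [J] only a sum of fewer than [d] variables is left,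
   and its [d]-th power lies in [J].
   Conversely, induct on [m].  Put [x = x_m] and [l = ell_m].  Modulo [J], [f = a + x b]
   with [a], [b] free of [x], and [ell_(m+1)^d = l^d + d x l^(d-1)] modulo [x^2].  As [J] is
   graded in [x], [ell_(m+1)^d f] in [J] means that [l^d a] and [l^(d-1) c] are in [J], where
   [c = l b + d a]; then also [l^(d+1) b] is in [J].  By induction [c] is in
   [G(m, d-1)], contained in [G(m+1, d)], and [b] is in [G(m, d+1)]; as [(d x - l) g(m, d+1)]
   is a sum of [S_(m+1)]-conjugates of [g(m+1, d)], [d f = c + (d x - l) b] is in
   [G(m+1, d)], and [d] is invertible in characteristic 0. *)

Section Squares.
Variable k : fieldType.

Section Ideals.
Variable n : nat.
Local Notation P := {mpoly k[n]}.

Definition is_ideal (I : P -> Prop) :=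
  [/\ I 0, forall p q, I p -> I q -> I (p + q) & forall r p, I p -> I (r * p)].

Section IdealTheory.
Variables (I : P -> Prop) (idI : is_ideal I).

Lemma ideal0 : I 0. Proof. by case: idI. Qed.

Lemma idealD p q : I p -> I q -> I (p + q). Proof. by case: idI => _ + _; apply. Qed.

Lemma ideal_mull r p : I p -> I (r * p). Proof. by case: idI => _ _; apply. Qed.

Lemma ideal_mulr r p : I p -> I (p * r). Proof. by rewrite mulrC; apply: ideal_mull. Qed.

Lemma idealN p : I p -> I (- p). Proof. by rewrite -mulN1r; apply: ideal_mull. Qed.

Lemma idealB p q : I p -> I q -> I (p - q).
Proof. by move=> Ip /idealN; apply: idealD. Qed.

Lemma ideal_sum (T : Type) (r : seq T) (Q : pred T) (F : T -> P) :
  (forall i, Q i -> I (F i)) -> I (\sum_(i <- r | Q i) F i).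
Proof. by move=> IF; elim/big_ind: _ => //; [apply: ideal0 | apply: idealD]. Qed.

End IdealTheory.

Lemma gen_ideal_is_ideal S : is_ideal (gen_ideal S).
Proof.
split.
- by exists 0%N, (fun _ => 0), (fun _ => 0); split; [case | rewrite big_ord0].
- move=> _ _ [m1 [c1 [g1 [S1 ->]]]] [m2 [c2 [g2 [S2 ->]]]].
  pose glue (h1 : 'I_m1 -> P) (h2 : 'I_m2 -> P) (i : 'I_(m1 + m2)) :=
    match split i with inl j => h1 j | inr j => h2 j end.
  exists (m1 + m2)%N, (glue c1 c2), (glue g1 g2); split.
    by move=> i; rewrite /glue; case: (split i).
  rewrite big_split_ord /glue; congr (_ + _); apply: eq_bigr => i _.
    by rewrite (unsplitK (inl _ i)).
  by rewrite (unsplitK (inr _ i)).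
- move=> r _ [m [c [g [Sg ->]]]]; exists m, (fun i => r * c i), g; split => //.
  by rewrite mulr_sumr; apply: eq_bigr => i _; rewrite mulrA.
Qed.

Lemma gen_ideal_gen (S : P -> Prop) g : S g -> gen_ideal S g.
Proof.
by move=> Sg; exists 1%N, (fun _ => 1), (fun _ => g); rewrite big_ord1 mul1r.
Qed.

Lemma gen_ideal_min S (I : P -> Prop) : is_ideal I -> (forall g, S g -> I g) ->
  forall f, gen_ideal S f -> I f.
Proof.
move=> idI SI _ [m [c [g [Sg ->]]]].
by apply: (ideal_sum idI) => i _; apply/(ideal_mull idI)/SI.
Qed.

Lemma gen_ideal_mono (S S' : P -> Prop) : (forall g, S g -> S' g) ->
  forall f, gen_ideal S f -> gen_ideal S' f.
Proof.
move=> SS'; apply: gen_ideal_min (gen_ideal_is_ideal S') _ => g Sg.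
exact/gen_ideal_gen/SS'.
Qed.

Lemma gen_ideal_mul_min S (I : P -> Prop) e : is_ideal I ->
  (forall g, S g -> I (e * g)) -> forall f, gen_ideal S f -> I (e * f).
Proof.
move=> idI SI; apply: gen_ideal_min SI.
split=> [|p q Ip Iq|r p Ip] /=.
- by rewrite mulr0; apply: ideal0.
- by rewrite mulrDr; apply: idealD.
- by rewrite mulrCA; apply: ideal_mull.
Qed.

Lemma gen_ideal_rmorph S (f : {rmorphism P -> P}) :
  (forall g, S g -> gen_ideal S (f g)) -> forall p, gen_ideal S p -> gen_ideal S (f p).
Proof.
move=> Sf; apply: gen_ideal_min Sf; have idS := gen_ideal_is_ideal S.
split=> [|p q Ip Iq|r p Ip] /=.
- by rewrite rmorph0; apply: ideal0.
- by rewrite rmorphD; apply: idealD.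
- by rewrite rmorphM; apply: ideal_mull.
Qed.

Lemma ideal_mulrn_pchar0 (I : P -> Prop) f e : [pchar k] =i pred0 -> is_ideal I ->
  I (f *+ e.+1) -> I f.
Proof.
move=> char0 idI If; have nz_e : (e.+1%:R : k) != 0 by rewrite (pcharf0P k).1.
rewrite -[f]scale1r -(mulVf nz_e) -scalerA scaler_nat -mul_mpolyC.
exact: ideal_mull.
Qed.

End Ideals.

Section SquaresIdeal.
Variable n : nat.
Local Notation P := {mpoly k[n]}.
Local Notation J := (@J k n).

Lemma mpoly_ind_ring (Q : P -> Prop) :
  (forall c, Q c%:MP) -> (forall i, Q 'X_i) ->
  (forall p q, Q p -> Q q -> Q (p + q)) -> (forall p q, Q p -> Q q -> Q (p * q)) ->
  forall p, Q p.
Proof.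
move=> QC QX QD QM p; elim/mpolyind: p => [|c m p _ _ Qp]; first by rewrite -mpolyC0.
apply: (QD) => //; rewrite -mul_mpolyC; apply: (QM) => //.
rewrite mpolyXE_id; apply: big_ind => [|//|i _]; first by rewrite -mpolyC1.
by elim: (m i) => [|e IH]; rewrite ?expr0 -?mpolyC1 // exprS; apply: (QM).
Qed.

Lemma J_is_ideal : is_ideal J. Proof. exact: gen_ideal_is_ideal. Qed.

Lemma J_X2 i : J ('X_i ^+ 2). Proof. by apply: gen_ideal_gen; exists i. Qed.

Definition subX0 (i : 'I_n) : {rmorphism P -> P} :=
  comp_mpoly [tuple if j == i then 0 : P else 'X_j | j < n].

Lemma subX0C i c : subX0 i c%:MP = c%:MP.
Proof. exact: comp_mpolyC. Qed.

Lemma subX0X i j : subX0 i 'X_j = if j == i then 0 else 'X_j.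
Proof. by rewrite [LHS]comp_mpolyXU -tnth_nth tnth_mktuple. Qed.

Lemma subX0_id i p : subX0 i (subX0 i p) = subX0 i p.
Proof.
elim/mpoly_ind_ring: p => [c|j|p q Hp Hq|p q Hp Hq]; rewrite ?rmorphD ?rmorphM ?Hp ?Hq //.
  by rewrite !subX0C.
by rewrite subX0X; case: eqP => [_|/eqP ne] /=; rewrite ?rmorph0 // subX0X (negPf ne).
Qed.

Lemma mderivXU i j : mderiv i 'X_j = (j == i)%:R :> P.
Proof.
rewrite mderivX mnm1E; case: eqP => [->|_]; last by rewrite scale0r.
have -> : (U_(i) - U_(i))%MM = 0%MM by apply/mnmP => l; rewrite mnmBE mnm0E subnn.
by rewrite mpolyX0 scale1r.
Qed.

Lemma mderiv_subX0 i p : mderiv i (subX0 i p) = 0.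
Proof.
elim/mpoly_ind_ring: p => [c|j|p q Hp Hq|p q Hp Hq].
- by rewrite subX0C mderivC.
- by rewrite subX0X; case: eqP => [_|/eqP ne]; rewrite ?mderiv0 // mderivXU (negPf ne).
- by rewrite rmorphD mderivD Hp Hq addr0.
- by rewrite rmorphM mderivM Hp Hq mul0r mulr0 addr0.
Qed.

Lemma J_subX0 i f : J f -> J (subX0 i f).
Proof.
apply: gen_ideal_rmorph => _ [j ->]; rewrite rmorphXn subX0X.
by case: eqP => _; [rewrite expr2 mul0r; apply: ideal0 J_is_ideal | apply: J_X2].
Qed.

(* [subX0 i (mderiv i _)] is not a ring morphism: pairing it with membership in
   [J] is what makes the set of polynomials it sends into [J] an ideal. *)
Lemma J_subX0_mderiv i f : J f -> J (subX0 i (mderiv i f)).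
Proof.
have idI : is_ideal (fun f => J f /\ J (subX0 i (mderiv i f))).
  split=> [|p q [Jp Jp'] [Jq Jq']|r p [Jp Jp']];
    rewrite ?mderiv0 ?mderivD ?mderivM ?rmorph0 ?rmorphD ?rmorphM.
  - by split; apply: ideal0 J_is_ideal.
  - by split; apply: (idealD J_is_ideal).
  - split; first exact: (ideal_mull J_is_ideal).
    by apply: (idealD J_is_ideal); apply: (ideal_mull J_is_ideal) => //; apply: J_subX0.
move=> Jf; have [] // := gen_ideal_min idI _ Jf => _ [l ->].
split; first exact: J_X2.
rewrite expr2 mderivM mderivXU rmorphD !rmorphM subX0X.
case: eqP => _; rewrite ?rmorph0 ?mulr0n ?(mul0r, mulr0, addr0); exact: ideal0 J_is_ideal.
Qed.

Lemma J_subX0_taylor i f : J (f - (subX0 i f + 'X_i * subX0 i (mderiv i f))).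
Proof.
have J0 := ideal0 J_is_ideal.
elim/mpoly_ind_ring: f => [c|j|p q Hp Hq|p q Hp Hq].
- by rewrite subX0C mderivC rmorph0 mulr0 addr0 subrr.
- rewrite subX0X mderivXU; case: eqP => [->|_]; last by rewrite rmorph0 mulr0 addr0 subrr.
  by rewrite rmorph1 mulr1 add0r subrr.
- rewrite mderivD !rmorphD.
  set r := _ - _; have -> : r = (p - (subX0 i p + 'X_i * subX0 i (mderiv i p)))
                            + (q - (subX0 i q + 'X_i * subX0 i (mderiv i q))) by rewrite /r; ring.
  exact: (idealD J_is_ideal Hp Hq).
- rewrite mderivM !rmorphD !rmorphM.
  set a := subX0 i p; set b := subX0 i (mderiv i p).
  set a' := subX0 i q; set b' := subX0 i (mderiv i q).
  have -> : p * q - (a * a' + 'X_i * (b * a' + a * b')) =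
     (p - (a + 'X_i * b)) * q + (a + 'X_i * b) * (q - (a' + 'X_i * b'))
     + 'X_i ^+ 2 * (b * b') by ring.
  have Jpq := idealD J_is_ideal (ideal_mulr J_is_ideal q Hp)
                                  (ideal_mull J_is_ideal (a + 'X_i * b) Hq).
  exact: (idealD J_is_ideal Jpq (ideal_mulr J_is_ideal (b * b') (J_X2 i))).
Qed.

Lemma J_subX0_split i p q : subX0 i p = p -> subX0 i q = q ->
  J (p + 'X_i * q) -> J p /\ J q.
Proof.
move=> Sp Sq Jpq; split.
  by move: (J_subX0 i Jpq); rewrite rmorphD rmorphM subX0X eqxx mul0r addr0 Sp.
move: (J_subX0_mderiv i Jpq); rewrite mderivD mderivM mderivXU eqxx mulr1n mul1r.
by rewrite -Sp mderiv_subX0 add0r rmorphD rmorphM subX0X eqxx mul0r addr0 Sq.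
Qed.

Lemma exprD_mod_sq (y z : P) d :
  exists r : P, (y + z) ^+ d.+1 = y ^+ d.+1 + z * y ^+ d *+ d.+1 + z ^+ 2 * r.
Proof.
elim: d => [|d [r IH]]; first by exists 0; ring.
exists (y * r + y ^+ d *+ d.+1 + z * r).
by rewrite exprS IH !exprS !mulrS; ring.
Qed.

(* Modulo [J], multiplication by [(l + x_i) ^ (d + 1)] only sees its part of degree
   at most one in [x_i]. *)
Lemma J_mul_exprD_split i (l a b : P) d :
  subX0 i l = l -> subX0 i a = a -> subX0 i b = b ->
  J ((l + 'X_i) ^+ d.+1 * (a + 'X_i * b)) ->
  J (l ^+ d.+1 * a) /\ J (l ^+ d * (l * b + a *+ d.+1)).
Proof.
move=> Sl Sa Sb; have [r ->] := exprD_mod_sq l 'X_i d => Jprod.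
apply: (J_subX0_split (i := i)).
- by rewrite rmorphM rmorphXn Sl Sa.
- by rewrite rmorphM rmorphD rmorphMn !rmorphM rmorphXn Sl Sa Sb.
have -> : l ^+ d.+1 * a + 'X_i * (l ^+ d * (l * b + a *+ d.+1)) =
  (l ^+ d.+1 + 'X_i * l ^+ d *+ d.+1 + 'X_i ^+ 2 * r) * (a + 'X_i * b)
  - 'X_i ^+ 2 * (l ^+ d * b *+ d.+1 + r * (a + 'X_i * b)) by rewrite !exprS; ring.
by apply: (idealB J_is_ideal) => //; apply: (ideal_mulr J_is_ideal); apply: J_X2.
Qed.

End SquaresIdeal.

Arguments J_is_ideal {n}.

Section ColonIdeal.
Variable n : nat.
Local Notation P := {mpoly k[n.+1]}.
Local Notation J := (@J k n.+1).
Local Notation var := (@var k n.+1).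
Local Notation pp := (@pair_prod k n.+1).

Lemma var_ord (i : 'I_n.+1) : var i = 'X_i.
Proof. by rewrite /Defs.var valK. Qed.

Lemma var_inord j : (j < n.+1)%N -> var j = 'X_(inord j).
Proof. by move=> ltjn; rewrite -var_ord inordK. Qed.

Lemma var_out j : (n.+1 <= j)%N -> var j = 0.
Proof. by move=> lenj; rewrite /Defs.var insubF // ltnNge lenj. Qed.

Lemma J_var2 j : J (var j ^+ 2).
Proof.
have [ltjn|lenj] := ltnP j n.+1; first by rewrite var_inord //; apply: J_X2.
by rewrite var_out // expr2 mul0r; apply: ideal0 J_is_ideal.
Qed.

Lemma msymXU (s : 'S_n.+1) i : msym s 'X_i = 'X_(s i) :> P.
Proof.
rewrite msymX; congr 'X_[_]; apply/mnmP => j; rewrite mnmE !mnm1E.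
by rewrite -(inj_eq (@perm_inj _ s)) permKV.
Qed.

Lemma subX0_var M u : (M < n.+1)%N -> u <> M -> subX0 (inord M) (var u) = var u.
Proof.
move=> ltMn neuM; have [ltun|] := ltnP u n.+1; last by move=> /var_out ->; rewrite rmorph0.
rewrite var_inord // subX0X; case: eqP => // /(congr1 (@nat_of_ord _)).
by rewrite !inordK.
Qed.

Definition tperm_nat (a b : nat) : 'S_n.+1 := tperm (inord a) (inord b).

Section Transposition.
Variables (a b : nat) (ltan : (a < n.+1)%N) (ltbn : (b < n.+1)%N).

Lemma msym_tperm_natL : msym (tperm_nat a b) (var a) = var b.
Proof. by rewrite !var_inord // msymXU tpermL. Qed.

Lemma msym_tperm_natR : msym (tperm_nat a b) (var b) = var a.
Proof. by rewrite !var_inord // msymXU tpermR. Qed.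

Lemma msym_tperm_natD j : j <> a -> j <> b -> msym (tperm_nat a b) (var j) = var j.
Proof.
move=> neja nejb; have [ltjn|lenj] := ltnP j n.+1; last by rewrite var_out ?msym0.
have inord_neq c : (c < n.+1)%N -> j <> c -> inord c != inord j :> 'I_n.+1.
  by move=> ltcn nejc; apply/eqP => /(congr1 (@nat_of_ord _)); rewrite !inordK //; lia.
by rewrite var_inord // msymXU tpermD ?inord_neq.
Qed.

End Transposition.

Lemma pair_prodS p : pp p.+1 = pp p * (var (2 * p) - var (2 * p + 1)).
Proof. by rewrite /pair_prod big_ord_recr. Qed.

Lemma msym_tperm_nat_pair_prod a b p : (2 * p <= a < n.+1)%N -> (2 * p <= b < n.+1)%N ->
  msym (tperm_nat a b) (pp p) = pp p.
Proof.
move=> /andP[lepa ltan] /andP[lepb ltbn].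
rewrite /pair_prod (big_morph _ (msymM _) (msym1 _ _)); apply: eq_bigr => i _.
by rewrite msymB !msym_tperm_natD //; have := ltn_ord i; lia.
Qed.

(* [S_m] is modelled by the permutations of ['I_n.+1] supported on [below m]. *)
Definition below m : {set 'I_n.+1} := [set i : 'I_n.+1 | (i < m)%N].

Definition sym_orbit m (g h : P) := exists2 s, perm_on (below m) s & h = msym s g.

Lemma sym_orbit_refl m g : sym_orbit m g g.
Proof. by exists 1%g; [apply: perm_on1 | rewrite msym1m]. Qed.

Lemma sym_orbit_msym m g h s : perm_on (below m) s -> sym_orbit m g h -> sym_orbit m g (msym s h).
Proof. by move=> ons [t ont ->]; exists (t * s)%g; [apply: perm_onM | rewrite msymMm]. Qed.

Lemma perm_on_below_tperm_nat m a b : (a < m)%N -> (b < m)%N -> perm_on (below m) (tperm_nat a b).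
Proof.
have inord_lt c : (c < m)%N -> (inord c < m)%N.
  by rewrite /inord /insubd; case: insubP => [i _ -> //|_ /=]; lia.
move=> ltam ltbm; apply: subset_trans (tperm_on _ _) _.
by apply/subsetP => i; rewrite !inE => /orP[] /eqP ->; apply: inord_lt.
Qed.

Lemma sym_orbit_tperm_nat m a b g h : (a < m)%N -> (b < m)%N ->
  sym_orbit m g (msym (tperm_nat a b) h) -> sym_orbit m g h.
Proof.
move=> ltam ltbm /(sym_orbit_msym (perm_on_below_tperm_nat ltam ltbm)).
by rewrite -msymMm tperm2 msym1m.
Qed.

Lemma perm_on_below_mono m m' s : (m <= m')%N -> perm_on (below m) s -> perm_on (below m') s.
Proof.
move=> lemm' /subset_trans; apply; apply/subsetP => i; rewrite !inE; lia.
Qed.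

Lemma sym_orbit_mono m m' g h : (m <= m')%N -> sym_orbit m g h -> sym_orbit m' g h.
Proof. by move=> lemm' [s ons ->]; exists s => //; apply: perm_on_below_mono ons. Qed.

Lemma perm_on_below_full s : perm_on (below n.+1) s.
Proof. by apply/subsetP => i _; rewrite inE. Qed.

Definition var_sum (s : seq nat) : P := \sum_(j <- s) var j.

Definition ell_lt m := var_sum (iota 0 m).

Lemma var_sum_cons j s : var_sum (j :: s) = var j + var_sum s.
Proof. exact: big_cons. Qed.

Lemma ell_ltS m : ell_lt m.+1 = ell_lt m + var m.
Proof. by rewrite /ell_lt /var_sum -[m.+1]addn1 iotaD big_cat big_seq1. Qed.

Lemma ell_lt_ord m : (m <= n.+1)%N -> ell_lt m = \sum_(i < n.+1 | (i < m)%N) 'X_i.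
Proof.
move=> lemn; rewrite /ell_lt /var_sum -[m in iota 0 m]subn0 -/(index_iota 0 m) big_mkord.
rewrite (big_ord_widen _ (fun j => var j) lemn).
by apply: eq_bigr => i _; rewrite var_ord.
Qed.

Lemma msym_ell_lt m s : (m <= n.+1)%N -> perm_on (below m) s -> msym s (ell_lt m) = ell_lt m.
Proof.
move=> lemn ons; rewrite ell_lt_ord // (big_morph _ (msymD s) (msym0 _ s)).
under eq_bigr do rewrite msymXU.
rewrite [RHS](reindex_inj (@perm_inj _ s)) /=; apply: eq_bigl => i.
by have := perm_closed i ons; rewrite !inE => ->.
Qed.

Lemma subX0_ell_lt M : (M < n.+1)%N -> subX0 (inord M) (ell_lt M) = ell_lt M.
Proof.
move=> ltMn; rewrite /ell_lt /var_sum rmorph_sum; apply: eq_big_seq => u.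
by rewrite mem_iota => /andP[_ ltuM]; apply: subX0_var => //; lia.
Qed.

Definition congJ (p q : P) := J (p - q).

Lemma congJ_refl p : congJ p p.
Proof. by rewrite /congJ subrr; apply: ideal0 J_is_ideal. Qed.

Lemma congJ_trans p q r : congJ p q -> congJ q r -> congJ p r.
Proof.
by move=> Jpq Jqr; rewrite /congJ -[p](subrK q) -addrA; apply: (idealD J_is_ideal).
Qed.

Lemma congJ_mull r p q : congJ p q -> congJ (r * p) (r * q).
Proof. by rewrite /congJ -mulrBr; apply: (ideal_mull J_is_ideal). Qed.

Lemma congJ_J p q : congJ p q -> J q -> J p.
Proof. by move=> Jpq Jq; rewrite -[p](subrK q); apply: (idealD J_is_ideal). Qed.

Lemma congJ_exp u l l' d : congJ (u * l) (u * l') -> congJ (u * l ^+ d) (u * l' ^+ d).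
Proof.
move=> Jl; elim: d => [|d IH]; first exact: congJ_refl.
rewrite !exprS mulrCA; apply: congJ_trans (congJ_mull l IH) _.
have -> : l * (u * l' ^+ d) = l' ^+ d * (u * l) by ring.
have -> : u * (l' * l' ^+ d) = l' ^+ d * (u * l') by ring.
exact: congJ_mull.
Qed.

Lemma J_var_sum_exp s e : (size s < e)%N -> J (var_sum s ^+ e).
Proof.
elim: s e => [|j s IH] [|[|e]] //= lte;
  try by rewrite /var_sum big_nil expr0n; apply: ideal0 J_is_ideal.
rewrite var_sum_cons addrC; have [r ->] := exprD_mod_sq (var_sum s) (var j) e.+1.
apply: (idealD J_is_ideal); first apply: (idealD J_is_ideal).
- by apply: IH; lia.
- rewrite -mulr_natr; apply: (ideal_mulr J_is_ideal).
  by apply: (ideal_mull J_is_ideal); apply: IH.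
- by apply: (ideal_mulr J_is_ideal); apply: J_var2.
Qed.

(* Each factor [x_(2i) - x_(2i+1)] of [pair_prod p] absorbs [x_(2i) + x_(2i+1)]
   into [x_(2i)^2 - x_(2i+1)^2], which lies in [J]. *)
Lemma congJ_pair_prod_ell_lt p m : (2 * p <= m)%N ->
  congJ (pp p * ell_lt m) (pp p * var_sum (iota (2 * p) (m - 2 * p))).
Proof.
elim: p => [|p IH] lepm; first by rewrite muln0 subn0; apply: congJ_refl.
rewrite pair_prodS; set x := var (2 * p); set y := var (2 * p + 1).
rewrite mulrAC mulrC; apply: congJ_trans (congJ_mull _ (IH _)) _; first lia.
have -> : iota (2 * p) (m - 2 * p) = [:: 2 * p, 2 * p + 1 & iota (2 * p.+1) (m - 2 * p.+1)]%N.
  have -> : (m - 2 * p = (m - 2 * p.+1).+2)%N by lia.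
  by rewrite /= mulnS add2n addn1.
rewrite !var_sum_cons /congJ; set t := var_sum _.
have -> : (x - y) * (pp p * (x + (y + t))) - pp p * (x - y) * t =
  pp p * (x ^+ 2 - y ^+ 2) by ring.
by apply: (ideal_mull J_is_ideal); apply: (idealB J_is_ideal); apply: J_var2.
Qed.

Lemma congJ_var_pair_prod_ell_lt p m : (2 * p < m)%N ->
  congJ (var (2 * p) * pp p * ell_lt m)
        (var (2 * p) * pp p * var_sum (iota (2 * p).+1 (m - (2 * p).+1))).
Proof.
move=> ltpm; set w := (2 * p)%N; set t := var_sum _.
rewrite -!mulrA; apply: congJ_trans (congJ_mull _ (congJ_pair_prod_ell_lt _)) _; first lia.
have -> : (m - w = (m - w.+1).+1)%N by lia.
rewrite var_sum_cons /congJ -/t.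
have -> : var w * (pp p * (var w + t)) - var w * (pp p * t) = pp p * var w ^+ 2 by ring.
by apply: (ideal_mull J_is_ideal); apply: J_var2.
Qed.

Definition colon_gen m d : P :=
  if odd (m + d) then pp ((m - d + 1) %/ 2) else var (m - d) * pp ((m - d) %/ 2).

Lemma colon_genS m d : colon_gen m d = colon_gen m.+1 d.+1.
Proof. by rewrite /colon_gen !addnS !addSn !subSS /= negbK. Qed.

Lemma J_ell_lt_exp_colon_gen m d : (0 < d <= m)%N -> J (ell_lt m ^+ d * colon_gen m d).
Proof.
move=> /andP[d0 ledm]; rewrite mulrC /colon_gen; case: ifP => odd_md.
  have md1 : ((m + d) %% 2 = 1)%N by rewrite modn2 odd_md.
  set p := ((m - d + 1) %/ 2)%N; have ep : (2 * p = m - d + 1)%N by rewrite /p; lia.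
  apply: congJ_J (congJ_exp d (congJ_pair_prod_ell_lt _)) _; first lia.
  by apply: (ideal_mull J_is_ideal); apply: J_var_sum_exp; rewrite size_iota; lia.
have md0 : ((m + d) %% 2 = 0)%N by rewrite modn2 odd_md.
set p := ((m - d) %/ 2)%N; have ep : (2 * p = m - d)%N by rewrite /p; lia.
rewrite -ep; apply: congJ_J (congJ_exp d (congJ_var_pair_prod_ell_lt _)) _; first lia.
by apply: (ideal_mull J_is_ideal); apply: J_var_sum_exp; rewrite size_iota; lia.
Qed.

Lemma J_msym s f : J f -> J (msym s f).
Proof. by apply: gen_ideal_rmorph => _ [i ->]; rewrite rmorphXn /= msymXU; apply: J_X2. Qed.

Definition colon_ideal m d := gen_ideal (fun g => J_gens g \/ sym_orbit m (colon_gen m d) g).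

Lemma colon_ideal_is_ideal m d : is_ideal (colon_ideal m d).
Proof. exact: gen_ideal_is_ideal. Qed.

Lemma colon_ideal_J m d f : J f -> colon_ideal m d f.
Proof. by apply: gen_ideal_mono => g; left. Qed.

Lemma colon_ideal_orbit m d g : sym_orbit m (colon_gen m d) g -> colon_ideal m d g.
Proof. by move=> orb; apply: gen_ideal_gen; right. Qed.

Lemma colon_ideal_congJ m d p q : congJ p q -> colon_ideal m d q -> colon_ideal m d p.
Proof.
move=> Jpq Iq; rewrite -[p](subrK q).
by apply: (idealD (colon_ideal_is_ideal m d)) => //; apply: colon_ideal_J.
Qed.

Lemma colon_ideal_msym m d s f : perm_on (below m) s ->
  colon_ideal m d f -> colon_ideal m d (msym s f).
Proof.
move=> ons; apply: gen_ideal_rmorph => g [[i ->]|orb]; apply: gen_ideal_gen.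
  by left; exists (s i); rewrite rmorphXn /= msymXU.
by right; apply: sym_orbit_msym.
Qed.

Lemma colon_ideal_succ m d f : colon_ideal m d f -> colon_ideal m.+1 d.+1 f.
Proof.
apply: gen_ideal_mono => g [Jg|orb]; [by left | right].
by rewrite -colon_genS; apply: sym_orbit_mono orb.
Qed.

Lemma J_ell_lt_exp_colon_ideal m d f : (0 < d <= m)%N -> (m <= n.+1)%N ->
  colon_ideal m d f -> J (ell_lt m ^+ d * f).
Proof.
move=> ltdm lemn; apply: gen_ideal_mul_min J_is_ideal _ _ => _ [[i ->]|[s ons ->]].
  by apply: (ideal_mull J_is_ideal); apply: J_X2.
rewrite -(msym_ell_lt lemn ons) -rmorphXn -msymM; apply: J_msym.
exact: J_ell_lt_exp_colon_gen.
Qed.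

Lemma sum_sub_var (y : P) s : \sum_(u <- s) (y - var u) = y *+ size s - var_sum s.
Proof.
elim: s => [|u s IH]; first by rewrite /var_sum !big_nil subrr.
by rewrite big_cons IH var_sum_cons mulrS; ring.
Qed.

Definition lead_sub_ell M d := var M *+ d - ell_lt M.

Lemma msym_lead_sub_ell M d s : (M < n.+1)%N -> perm_on (below M) s ->
  msym s (lead_sub_ell M d) = lead_sub_ell M d.
Proof.
move=> ltMn ons; rewrite msymB msymMn msym_ell_lt ?(ltnW ltMn) //.
rewrite /lead_sub_ell var_inord // msymXU (out_perm ons) //.
by rewrite inE inordK // ltnn.
Qed.

(* Modulo [J], multiplying [lead_sub_ell M d] by [g] only involves the [d] variables
   of [ell_lt M] that survive in [g * ell_lt M]. *)
Lemma colon_ideal_lead_sub_ell M d a g :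
  congJ (g * ell_lt M) (g * var_sum (iota a d)) ->
  (forall u, (a <= u < a + d)%N -> colon_ideal M.+1 d ((var M - var u) * g)) ->
  colon_ideal M.+1 d (lead_sub_ell M d * g).
Proof.
move=> Jg Ig; have idI := colon_ideal_is_ideal M.+1 d.
apply: (colon_ideal_congJ (q := (var M *+ d - var_sum (iota a d)) * g)).
  rewrite /congJ; have -> : lead_sub_ell M d * g - (var M *+ d - var_sum (iota a d)) * g =
    - (g * ell_lt M - g * var_sum (iota a d)) by rewrite /lead_sub_ell; ring.
  exact: (idealN J_is_ideal).
rewrite -[X in var M *+ X](size_iota a d) -sum_sub_var mulr_suml big_seq.
by apply: (ideal_sum idI) => u; rewrite mem_iota; apply: Ig.
Qed.

Lemma colon_gen_odd M d : (0 < d <= M)%N -> odd (M.+1 + d) ->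
  exists2 p, (2 * p = M - d)%N & colon_gen M.+1 d = pp p.+1 /\ colon_gen M d.+1 = pp p.
Proof.
move=> /andP[d0 ledM] odd_Md; have Md : ((M.+1 + d) %% 2 = 1)%N by rewrite modn2 odd_Md.
exists ((M - d) %/ 2)%N; first lia.
rewrite /colon_gen odd_Md (addnS M d) -(addSn M d) odd_Md; split; congr pp; lia.
Qed.

Lemma colon_gen_even M d : (0 < d <= M)%N -> ~~ odd (M.+1 + d) ->
  exists2 p, ((2 * p).+1 = M - d)%N &
    colon_gen M.+1 d = var (2 * p).+2 * pp p.+1 /\ colon_gen M d.+1 = var (2 * p) * pp p.
Proof.
move=> /andP[d0 ledM] even_Md; have Md : ((M.+1 + d) %% 2 = 0)%N.
  by rewrite modn2 (negbTE even_Md).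
exists ((M - d.+1) %/ 2)%N; first lia.
rewrite /colon_gen (negbTE even_Md) (addnS M d) -(addSn M d) (negbTE even_Md).
by split; congr (var _ * pp _); lia.
Qed.

Lemma sym_orbit_pair_prod_odd m p u v : (2 * p <= u < v)%N -> (v < m <= n.+1)%N ->
  sym_orbit m (pp p.+1) (pp p * (var u - var v)).
Proof.
move=> /andP[lepu ltuv] /andP[ltvm lemn].
apply: (sym_orbit_tperm_nat (a := 2 * p) (b := u)); try lia.
rewrite msymM msymB msym_tperm_nat_pair_prod ?msym_tperm_natR ?msym_tperm_natD; try lia.
apply: (sym_orbit_tperm_nat (a := 2 * p + 1) (b := v)); try lia.
rewrite msymM msymB msym_tperm_nat_pair_prod ?msym_tperm_natR ?msym_tperm_natD; try lia.
by rewrite -pair_prodS; apply: sym_orbit_refl.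
Qed.

Lemma sym_orbit_pair_prod_even m p u v : (2 * p < u < v)%N -> (v < m <= n.+1)%N ->
  sym_orbit m (var (2 * p).+2 * pp p.+1) (var (2 * p) * (pp p * (var v - var u))).
Proof.
move=> /andP[ltpu ltuv] /andP[ltvm lemn].
apply: (sym_orbit_tperm_nat (a := 2 * p + 1) (b := u)); try lia.
rewrite !msymM msymB msym_tperm_nat_pair_prod ?msym_tperm_natR ?msym_tperm_natD; try lia.
apply: (sym_orbit_tperm_nat (a := (2 * p).+2) (b := v)); try lia.
rewrite !msymM msymB msym_tperm_nat_pair_prod ?msym_tperm_natR ?msym_tperm_natD; try lia.
apply: (sym_orbit_tperm_nat (a := (2 * p).+2) (b := 2 * p)); try lia.
rewrite !msymM msymB msym_tperm_nat_pair_prod ?msym_tperm_natL; try lia.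
rewrite ?msym_tperm_natR ?msym_tperm_natD; try lia.
by rewrite -pair_prodS; apply: sym_orbit_refl.
Qed.

Lemma colon_ideal_lead_sub_ell_colon_gen M d : (M < n.+1)%N -> (0 < d <= M)%N ->
  colon_ideal M.+1 d (lead_sub_ell M d * colon_gen M d.+1).
Proof.
move=> ltMn ltdM; have idI := colon_ideal_is_ideal M.+1 d.
case: (boolP (odd (M.+1 + d))) => [/(colon_gen_odd ltdM)|/(colon_gen_even ltdM)].
  move=> [p ep [gen_Md ->]]; apply: (colon_ideal_lead_sub_ell (a := 2 * p)).
    by rewrite (_ : d = M - 2 * p)%N; [apply: congJ_pair_prod_ell_lt | ]; lia.
  move=> u ltu; rewrite -opprB mulNr mulrC; apply/(idealN idI)/colon_ideal_orbit.
  by rewrite gen_Md; apply: sym_orbit_pair_prod_odd; lia.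
move=> [p ep [gen_Md ->]]; apply: (colon_ideal_lead_sub_ell (a := (2 * p).+1)).
  rewrite (_ : d = M - (2 * p).+1)%N; last lia.
  by apply: congJ_var_pair_prod_ell_lt; lia.
move=> u ltu; rewrite (mulrC (var M - var u)) -mulrA; apply: colon_ideal_orbit.
by rewrite gen_Md; apply: sym_orbit_pair_prod_even; lia.
Qed.

Lemma colon_ideal_full M f : colon_ideal M M.+1 f.
Proof.
have gen1 : colon_gen M M.+1 = 1.
  by rewrite /colon_gen addnS addnn /= odd_double subnS subnn /pair_prod big_ord0.
rewrite -[f]mulr1 -gen1; apply: (ideal_mull (colon_ideal_is_ideal M M.+1)).
exact/colon_ideal_orbit/sym_orbit_refl.
Qed.

Lemma colon_ideal_top_var M u : (u <= M < n.+1)%N -> colon_ideal M.+1 M.+1 (var u).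
Proof.
move=> /andP[leuM ltMn]; apply: colon_ideal_orbit.
have -> : colon_gen M.+1 M.+1 = var 0.
  by rewrite /colon_gen addnn odd_double subnn /pair_prod big_ord0 mulr1.
apply: (sym_orbit_tperm_nat (a := 0) (b := u)); try lia.
by rewrite msym_tperm_natR; [apply: sym_orbit_refl | lia | lia].
Qed.

Lemma colon_ideal_top M : (M < n.+1)%N -> colon_ideal M.+1 M.+1 (lead_sub_ell M M.+1).
Proof.
move=> ltMn; have idI := colon_ideal_is_ideal M.+1 M.+1.
apply: (idealB idI).
  by rewrite -mulr_natr; apply/(ideal_mulr idI)/colon_ideal_top_var; lia.
rewrite /ell_lt /var_sum big_seq; apply: (ideal_sum idI) => u.
by rewrite mem_iota => ltuM; apply: colon_ideal_top_var; lia.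
Qed.

Lemma colon_ideal_mul_lead_sub_ell M d b : (M < n.+1)%N -> (0 < d <= M)%N ->
  colon_ideal M d.+1 b -> colon_ideal M.+1 d (lead_sub_ell M d * b).
Proof.
move=> ltMn ltdM; have idI := colon_ideal_is_ideal M.+1 d.
apply: gen_ideal_mul_min idI _ b => _ [[i ->]|[s ons ->]].
  by apply/colon_ideal_J/(ideal_mull J_is_ideal)/J_X2.
rewrite -(msym_lead_sub_ell d ltMn ons) -msymM.
apply: colon_ideal_msym; first exact: perm_on_below_mono ons.
exact: colon_ideal_lead_sub_ell_colon_gen.
Qed.

Definition colon_J_sub m :=
  forall d f, (0 < d <= m)%N -> J (ell_lt m ^+ d * f) -> colon_ideal m d f.

Section Induction.
Variables (M : nat) (ltMn : (M < n.+1)%N) (IH : colon_J_sub M).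

Lemma colon_J_sub_lead d b : (0 < d <= M.+1)%N -> J (ell_lt M ^+ d.+1 * b) ->
  colon_ideal M.+1 d (lead_sub_ell M d * b).
Proof.
move=> /andP[d0 ledM] Jb; have [ledM'|->] : (d <= M)%N \/ d = M.+1 by lia.
  apply: colon_ideal_mul_lead_sub_ell; rewrite ?d0 //.
  have [ltdM|->] : (d < M)%N \/ d = M by lia.
    by apply: IH => //; rewrite ltdM.
  exact: colon_ideal_full.
by apply: (ideal_mulr (colon_ideal_is_ideal _ _)); apply: colon_ideal_top.
Qed.

Lemma colon_J_sub_pred d c : (d <= M)%N -> J (ell_lt M ^+ d * c) -> colon_ideal M.+1 d.+1 c.
Proof.
case: d => [_|d ltdM Jc]; first by rewrite expr0 mul1r; apply: colon_ideal_J.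
by apply/colon_ideal_succ/IH.
Qed.

Hypothesis char0 : [pchar k] =i pred0.

Lemma colon_J_subS : colon_J_sub M.+1.
Proof.
move=> [//|d] f /andP[_ ledM] Jf; set e := d.+1.
set x : 'I_n.+1 := inord M; have varM : var M = 'X_x by apply: var_inord.
(* Modulo [J], [f = a + x_M * b] with [a] and [b] free of [x_M]. *)
set l := ell_lt M; set a := subX0 x f; set b := subX0 x (mderiv x f).
have Jab : J ((l + 'X_x) ^+ e * (a + 'X_x * b)).
  apply: (congJ_J (q := (l + 'X_x) ^+ e * f)); last by rewrite -varM -ell_ltS.
  rewrite /congJ -mulrBr -opprB mulrN; apply/(idealN J_is_ideal)/(ideal_mull J_is_ideal).
  exact: J_subX0_taylor.
have [Ja Jc] := J_mul_exprD_split (subX0_ell_lt ltMn) (subX0_id x f) (subX0_id x _) Jab.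
set c := l * b + a *+ e in Jc.
have Ic : colon_ideal M.+1 e c by apply: colon_J_sub_pred.
have Ib : colon_ideal M.+1 e (lead_sub_ell M e * b).
  apply: colon_J_sub_lead => //.
  have -> : l ^+ e.+1 * b = l * (l ^+ d * c) - (l ^+ e * a) *+ e.
    by rewrite /c /e !exprS; move: (l ^+ d) => L; ring.
  apply: (idealB J_is_ideal); first exact: (ideal_mull J_is_ideal).
  by rewrite -mulr_natr; apply: (ideal_mulr J_is_ideal).
have idI := colon_ideal_is_ideal M.+1 e.
apply: (ideal_mulrn_pchar0 (e := d) char0 idI); rewrite -/e.
have -> : f *+ e = (f - (a + 'X_x * b)) *+ e + c + lead_sub_ell M e * b.
  by rewrite /c /lead_sub_ell -/l varM; ring.
apply: (idealD idI) => //; apply: (idealD idI) => //.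
by rewrite -mulr_natr; apply/colon_ideal_J/(ideal_mulr J_is_ideal)/J_subX0_taylor.
Qed.

End Induction.

Lemma colon_J_sub_le (char0 : [pchar k] =i pred0) m : (m <= n.+1)%N -> colon_J_sub m.
Proof.
elim: m => [_ d f ltd0|m IH ltmn]; first by exfalso; lia.
exact: colon_J_subS ltmn (IH (ltnW ltmn)) char0.
Qed.

Lemma J_plus_sym_colon_ideal d f : J_plus_sym (colon_gen n.+1 d) f <-> colon_ideal n.+1 d f.
Proof.
split; apply: gen_ideal_mono => g [Jg|orb]; [by left| right| by left| right].
  by case: orb => s ->; exists s => //; apply: perm_on_below_full.
by case: orb => s _ ->; exists s.
Qed.

End ColonIdeal.

End Squares.

Theorem mainTheorem6 (k : fieldType) (n d : nat) :
  [pchar k] =i pred0 ->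
  (0 < d)%N -> (d <= n)%N ->
  (forall f : {mpoly k[n]},
     colon (@J k n) (ell k n ^+ d) f <->
     J_plus_sym
       (if odd (n + d) then pair_prod k n ((n - d + 1) %/ 2)
        else var k n (n - d) * pair_prod k n ((n - d) %/ 2)) f).
Proof.
case: n => [|n] char0 d0 ledn; first by have := leq_trans d0 ledn.
rewrite -/(colon_gen k n.+1 d).
have -> : ell k n.+1 = ell_lt k n n.+1.
  by rewrite ell_lt_ord //; apply: eq_bigl => i; rewrite ltn_ord.
move=> f; rewrite /colon mulrC J_plus_sym_colon_ideal; split.
  by apply: colon_J_sub_le; rewrite ?d0.
by apply: J_ell_lt_exp_colon_ideal; rewrite ?d0.
Qed.
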